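(* Let $t_1(x,y):=(x\wedge y)\vee(x\vee y)'$ and $t(x,y,z):=\Bigg(\bigg(\Big(\big((x\vee y)\wedge z\big)'\vee x\Big)\wedge(x\vee y)\bigg)'\vee x\Bigg)\wedge\Big(\big((x\vee y)\wedge z\big)'\vee y\Big)\wedge(x\vee y)$. Then the variety $\mathcal V$ satisfies the identities: (i) $x\vee(x\wedge y)'\approx1$; (ii) $y\vee(x\wedge y)'\approx1$; (iii) $x\approx(x\vee y)\wedge\big(x\vee(x\vee y)'\big)$; (iv) $y\approx(x\vee y)\wedge\big(y\vee(x\vee y)'\big)$; (v) $(x\vee y)\wedge t_1(x,y)\approx x\wedge y$; (vi) $t_1(x,x)\approx1$; (vii) $t\big(x,y,t_1(x,y)\big)\approx x$; (viii) $t(x,y,1)\approx y$.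
   Context: $\mathcal V$ is the variety of algebras $(L,\vee,\wedge,{}',0,1)$ that are bounded lattices with a complementation $'$ (i.e. $x\vee x'\approx1$, $x\wedge x'\approx0$) satisfying the identities $x\vee y'\approx y'\vee\big((x\vee y')\wedge y\big)$ and $x\wedge y\approx x\wedge\big((x\wedge y)\vee x'\big)$. *)

Record VAlg {L : Type} (join meet : L -> L -> L) (c : L -> L) (zero one : L) : Prop := {
  join_comm : forall x y, join x y = join y x;
  meet_comm : forall x y, meet x y = meet y x;
  join_assoc : forall x y z, join x (join y z) = join (join x y) z;
  meet_assoc : forall x y z, meet x (meet y z) = meet (meet x y) z;
  join_absorb : forall x y, join x (meet x y) = x;
  meet_absorb : forall x y, meet x (join x y) = x;
  join_zero : forall x, join x zero = x;
  meet_one : forall x, meet x one = x;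
  compl_join : forall x, join x (c x) = one;
  compl_meet : forall x, meet x (c x) = zero;
  V_id1 : forall x y, join x (c y) = join (c y) (meet (join x (c y)) y);
  V_id2 : forall x y, meet x y = meet x (join (meet x y) (c x))
}.

Definition t1 {L : Type} (join meet : L -> L -> L) (c : L -> L) (x y : L) : L :=
  join (meet x y) (c (join x y)).

Definition tt {L : Type} (join meet : L -> L -> L) (c : L -> L) (x y z : L) : L :=
  meet (meet (join (c (meet (join (c (meet (join x y) z)) x) (join x y))) x)
             (join (c (meet (join x y) z)) y))
       (join x y).

From Stdlib Require Import Setoid.

(* Everything follows from two consequences of the defining identities of V for
   a pair a <= b: the first gives b v a' = 1, the second a = b ^ (a v b').
   Items (i)-(v) are instances with a = x ^ y or a in {x, y} and b = x v y;
   (vii) and (viii) then collapse [tt] by rewriting with these instances. *)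

Section VAlgebra.

Variables (L : Type) (join meet : L -> L -> L) (c : L -> L) (zero one : L).
Hypothesis HV : VAlg join meet c zero one.

Let jC := join_comm _ _ _ _ _ HV.
Let mC := meet_comm _ _ _ _ _ HV.
Let mA := meet_assoc _ _ _ _ _ HV.
Let jK := join_absorb _ _ _ _ _ HV.
Let mK := meet_absorb _ _ _ _ _ HV.

Lemma meet_idem x : meet x x = x.
Proof. rewrite <- (jK x x) at 2. apply mK. Qed.

Lemma join_idem x : join x x = x.
Proof. rewrite <- (mK x x) at 2. apply jK. Qed.

Lemma meet_one_l x : meet one x = x.
Proof. rewrite mC. apply (meet_one _ _ _ _ _ HV). Qed.

Lemma meet_joinr_id a b u : meet a b = a -> meet a (join b u) = a.
Proof. intro Hab. rewrite <- Hab at 1. rewrite <- mA, mK. exact Hab. Qed.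

Lemma meet_join_r_absorb x y : meet y (join x y) = y.
Proof. rewrite jC. apply mK. Qed.

Lemma meet_meet_join x y : meet (meet x y) (join x y) = meet x y.
Proof. rewrite <- mA, jC, mK. reflexivity. Qed.

Lemma join_compl_of_le a b : meet a b = a -> join b (c a) = one.
Proof.
  intro Hab.
  rewrite (V_id1 _ _ _ _ _ HV), (mC _ a), (meet_joinr_id _ _ _ Hab), jC.
  apply (compl_join _ _ _ _ _ HV).
Qed.

Lemma meet_join_compl_of_le a b : meet a b = a -> a = meet b (join a (c b)).
Proof.
  intro Hab. assert (E := V_id2 _ _ _ _ _ HV b a).
  rewrite mC, Hab in E. exact E.
Qed.

Lemma join_compl_meet_l x y : join x (c (meet x y)) = one.
Proof.
  apply join_compl_of_le. rewrite (mC x y), <- mA, meet_idem. reflexivity.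
Qed.

Lemma join_compl_meet_r x y : join y (c (meet x y)) = one.
Proof. rewrite mC. apply join_compl_meet_l. Qed.

Lemma meet_join_compl_join_l x y : x = meet (join x y) (join x (c (join x y))).
Proof. apply meet_join_compl_of_le, mK. Qed.

Lemma meet_join_compl_join_r x y : y = meet (join x y) (join y (c (join x y))).
Proof. apply meet_join_compl_of_le, meet_join_r_absorb. Qed.

Lemma meet_join_t1 x y : meet (join x y) (t1 join meet c x y) = meet x y.
Proof. symmetry. apply meet_join_compl_of_le, meet_meet_join. Qed.

Lemma t1_diag x : t1 join meet c x x = one.
Proof. unfold t1. rewrite meet_idem, join_idem. apply (compl_join _ _ _ _ _ HV). Qed.

Lemma tt_t1 x y : tt join meet c x y (t1 join meet c x y) = x.
Proof.
  unfold tt. rewrite meet_join_t1, (jC (c (meet x y)) x), (jC (c (meet x y)) y),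
    join_compl_meet_l, join_compl_meet_r, meet_one_l, (meet_one _ _ _ _ _ HV).
  rewrite (jC (c _) x), mC. symmetry. apply meet_join_compl_join_l.
Qed.

Lemma tt_one x y : tt join meet c x y one = y.
Proof.
  unfold tt. rewrite (meet_one _ _ _ _ _ HV), (jC (c (join x y)) x),
    (mC (join x (c (join x y))) (join x y)),
    <- meet_join_compl_join_l, (jC (c x) x), (compl_join _ _ _ _ _ HV), meet_one_l.
  rewrite (jC (c (join x y)) y), mC. symmetry. apply meet_join_compl_join_r.
Qed.

End VAlgebra.

Theorem lemma1 (L : Type) (join meet : L -> L -> L) (c : L -> L) (zero one : L) :
  VAlg join meet c zero one ->
  (forall x y, join x (c (meet x y)) = one) /\
  (forall x y, join y (c (meet x y)) = one) /\
  (forall x y, x = meet (join x y) (join x (c (join x y)))) /\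
  (forall x y, y = meet (join x y) (join y (c (join x y)))) /\
  (forall x y, meet (join x y) (t1 join meet c x y) = meet x y) /\
  (forall x, t1 join meet c x x = one) /\
  (forall x y, tt join meet c x y (t1 join meet c x y) = x) /\
  (forall x y, tt join meet c x y one = y).
Proof.
  intro HV.
  repeat split; intros.
  - apply (join_compl_meet_l _ _ _ _ _ _ HV).
  - apply (join_compl_meet_r _ _ _ _ _ _ HV).
  - apply (meet_join_compl_join_l _ _ _ _ _ _ HV).
  - apply (meet_join_compl_join_r _ _ _ _ _ _ HV).
  - apply (meet_join_t1 _ _ _ _ _ _ HV).
  - apply (t1_diag _ _ _ _ _ _ HV).
  - apply (tt_t1 _ _ _ _ _ _ HV).
  - apply (tt_one _ _ _ _ _ _ HV).
Qed.
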